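(* Let $K_0$ be a number field, $K$ a finite Galois extension of $K_0$, $R$ the ring of integers of $K$, and $0\ne b\in R$. Then there exists $z\in R\setminus R^\times$ which is a primitive element of $K/K_0$ such that its conjugates $z^\gamma$, $\gamma\in\operatorname{Gal}(K/K_0)$, are pairwise coprime (i.e. $z^\gamma R+z^{\delta}R=R$ for $\gamma\ne\delta$), and each conjugate of $z$ is coprime to $b$. *)

From HB Require Import structures.
From mathcomp Require Import all_boot all_order all_algebra all_fingroup all_solvable all_field.
Set Implicit Arguments. Unset Strict Implicit. Unset Printing Implicit Defensive.
Import GRing.Theory Num.Theory.
Local Open Scope ring_scope.

Definition is_alg_integer (L : nzRingType) (x : L) : Prop :=
  exists p : {poly int}, p \is monic /\ root (map_poly (intr : int -> L) p) x.

Definition in_ring_of_integers (F : fieldType) (L : fieldExtType F)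
    (K : {vspace L}) (x : L) : Prop :=
  x \in K /\ is_alg_integer x.

From HB Require Import structures.
From mathcomp Require Import all_boot all_order all_algebra all_fingroup all_solvable all_field.
From mathcomp Require Import ring zify.
Import GRing.Theory Num.Theory.
Local Open Scope ring_scope.

(* Pick an integral primitive element th of K/K0.  The conjugate differences
   g th - h th (g <> h in Gal(K/K0)) and b are nonzero integers of K, so the
   absolute norm d of their product is a nonzero rational integer divisible
   in O_K by each of them.  For a positive integer m put e = m d and
   z = 1 + e th; since e is rational, g z = 1 + e (g th).  Thus z is an
   integral primitive element; g z is congruent to 1 modulo e, hence modulo
   b, so it is coprime to b; and g z - h z = e (g th - h th) with
   (g th - h th) | e, which makes distinct conjugates coprime.  Finally
   N(1 + m d th) is a nonconstant polynomial in m, so some m gives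
   N(z) <> +-1, i.e. z is not a unit of O_K. *)

Section IntegersOfL.

Context {L : splittingFieldType rat}.

Local Notation Int x := (integralOver (intr : int -> L) x).

Lemma IntE (x : L) : is_alg_integer x <-> Int x.
Proof. by split=> [[p [mp rp]]|[p mp rp]]; exists p. Qed.

Lemma Int_aend (f : 'AEnd(L)) (x : L) : Int x -> Int (f x).
Proof.
case=> p mp rp; exists p => //.
have := rmorph_root f rp; rewrite -map_poly_comp.
by rewrite (eq_map_poly (fun a => rmorph_int f a)).
Qed.

Lemma Int_prod (I : finType) (P : pred I) (F : I -> L) :
  (forall i, P i -> Int (F i)) -> Int (\prod_(i | P i) F i).
Proof. by move=> IF; apply: big_ind => //; [exact: integral1 | exact: integral_mul]. Qed.

(* A rational number that is an algebraic integer is an integer; this is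
   transported from the corresponding fact for algebraic complex numbers. *)
Lemma Int_rat (r : rat) : Int (r%:A : L) -> r \is a Num.int.
Proof.
case=> p mp rp.
have rp' : root (map_poly (intr : int -> rat) p) r.
  rewrite -(fmorph_root (in_alg L)) -map_poly_comp.
  by rewrite (eq_map_poly (fun a => rmorph_int (in_alg L) a)).
have rpC : root (map_poly (intr : int -> algC) p) (ratr r).
  rewrite -(fmorph_root (ratr : rat -> algC)) in rp'.
  by rewrite -map_poly_comp (eq_map_poly (fun a => rmorph_int _ a)) in rp'.
rewrite -Cint_rat; apply: Cint_rat_Aint; first exact: Crat_rat.
apply: root_monic_Aint rpC _ _; first exact: monic_map.
by apply/polyOverP => i; rewrite coef_map /= rpred_int.
Qed.

(* If x is a root of a monic p and c is an algebraic integer such that c times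
   each non-leading coefficient of p is integral, then c x is integral: it is a
   root of the monic polynomial sum_i p_i c^(k-i) X^i, k = deg p. *)
Lemma Int_scale_root (p : {poly L}) (x c : L) :
  p \is monic -> root p x -> Int c ->
  (forall i, (i < (size p).-1)%N -> Int (p`_i * c)) -> Int (c * x).
Proof.
move=> mp rp Ic Ip; set k := (size p).-1.
have sp : size p = k.+1 by rewrite /k prednK // lt0n size_poly_eq0 monic_neq0.
have lead1 : p`_k = 1 by have := monicP mp; rewrite /lead_coef sp.
pose P := \poly_(i < size p) (p`_i * c ^+ (k - i)).
have coefP i : P`_i = if (i < size p)%N then p`_i * c ^+ (k - i) else 0.
  by rewrite coef_poly.
have IcX n : Int (c ^+ n).
  by elim: n => [|n IHn]; rewrite ?expr0 ?exprS; [exact: integral1 | exact: integral_mul].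
have sP : size P = size p.
  by apply: size_poly_eq; rewrite sp subnn expr0 mulr1 lead1 oner_neq0.
apply: (@integral_root_monic int L intr (c * x) P).
- by rewrite monicE /lead_coef sP coefP sp ltnSn subnn expr0 mulr1 lead1.
- rewrite /root horner_poly.
  have -> : \sum_(i < size p) p`_i * c ^+ (k - i) * (c * x) ^+ i
           = c ^+ k * \sum_(i < size p) p`_i * x ^+ i.
    rewrite mulr_sumr; apply: eq_bigr => i _.
    have hi : (i <= k)%N by rewrite -ltnS -sp.
    rewrite exprMn -[in RHS](subnK hi) exprD; ring.
  by rewrite -horner_coef (rootP rp) mulr0.
- apply/integral_poly => i; rewrite coefP.
  case: ifP => hi; last exact: integral0.
  have [lik | ] := ltnP i k.
    rewrite -(subnSK lik) exprS mulrA.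
    by apply: integral_mul; [exact: Ip | exact: IcX].
  move=> kle; have -> : i = k by apply/eqP; rewrite eqn_leq kle andbT -ltnS -sp.
  by rewrite subnn expr0 mulr1 lead1; exact: integral1.
Qed.

Lemma exists_Int_multiple (x : L) : exists2 a : int, a != 0 & Int (a%:~R * x).
Proof.
have [p0 Dp] := polyOver1P (minPolyOver 1 x).
have [q [a nz_a Dq]] := rat_poly_scale p0.
exists a => //.
apply: (@Int_scale_root (minPoly 1 x)).
- exact: monic_minPoly.
- exact: root_minPoly.
- exact: integral_id.
move=> i _; rewrite Dp coef_map /= Dq coefZ coef_map /=.
rewrite -(rmorph_int (in_alg L) a) -(rmorphM (in_alg L)) /= mulrC mulrA.
by rewrite mulfV ?intr_eq0 // mul1r scaler_int; exact: integral_id.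
Qed.

Definition int_coprime (K : {subfield L}) (x y : L) : Prop :=
  exists r s : L,
    [/\ in_ring_of_integers K r, in_ring_of_integers K s & x * r + y * s = 1].

Section RingOfIntegersOfK.

Context {K : {subfield L}}.

Local Notation O x := (in_ring_of_integers K x).

Lemma roi1 : O 1.
Proof. by split; [exact: rpred1 | apply/IntE; exact: integral1]. Qed.

Lemma roiN x : O x -> O (- x).
Proof. by case=> xK /IntE Ix; split; [rewrite rpredN | apply/IntE; exact: integral_opp]. Qed.

Lemma roiD x y : O x -> O y -> O (x + y).
Proof.
case=> xK /IntE Ix [yK /IntE Iy].
by split; [rewrite rpredD | apply/IntE; exact: integral_add].
Qed.

Lemma roiM x y : O x -> O y -> O (x * y).
Proof.
case=> xK /IntE Ix [yK /IntE Iy].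
by split; [rewrite rpredM | apply/IntE; exact: integral_mul].
Qed.

Lemma roi_nat n : O n%:R.
Proof. by split; [exact: rpred_nat | apply/IntE; exact: integral_nat]. Qed.

Lemma roi_gal (g : gal_of K) {x} : O x -> O (g x).
Proof. by case=> xK /IntE Ix; split; [exact: memv_gal | apply/IntE; exact: Int_aend]. Qed.

Lemma coprime_one_mod {x y e u f : L} :
  O u -> O f -> x = 1 + e * u -> e = y * f -> int_coprime K x y.
Proof.
move=> Ou Of -> ->; exists 1, (- (f * u)); split; first exact: roi1.
  by apply: roiN; apply: roiM.
ring.
Qed.

(* Two elements 1 + e u and 1 + e v with (u - v) | e are coprime: e^2 is a
   multiple of their difference e (u - v), and (1 + e u)(1 - e u) = 1 - e^2 u^2. *)
Lemma coprime_shifts {x y e u v f : L} :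
  O e -> O u -> O f -> x = 1 + e * u -> y = 1 + e * v -> e = (u - v) * f ->
  int_coprime K x y.
Proof.
move=> Oe Ou Of -> -> ef.
have Ofuu : O (f * u * u) by apply: roiM => //; exact: roiM.
exists (1 - e * u + f * u * u), (- (f * u * u)); split.
- by apply: roiD => //; apply: roiD; [exact: roi1 | apply: roiN; exact: roiM].
- exact: roiN.
by rewrite ef; ring.
Qed.

End RingOfIntegersOfK.

Lemma adjoin_affine (K0 : {subfield L}) (x a c : L) :
  a \in K0 -> c \in K0 -> c != 0 -> <<K0; a + c * x>>%VS = <<K0; x>>%VS.
Proof.
move=> aK cK nzc; apply/eqP; rewrite eqEsubv; apply/andP; split.
  apply/FadjoinP; split; first exact: subv_adjoin.
  have inKx y : y \in K0 -> y \in <<K0; x>>%VS by apply/subvP/subv_adjoin.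
  by apply: memvD; [exact: inKx | apply: memvM; [exact: inKx | exact: memv_adjoin]].
apply/FadjoinP; split; first exact: subv_adjoin.
set y := a + c * x.
have inKy t : t \in K0 -> t \in <<K0; y>>%VS by apply/subvP/subv_adjoin.
have -> : x = (y - a) / c by rewrite /y addrC addKr mulrC mulKf.
apply: memvM; last by rewrite memvV inKy.
by apply: memvB; [exact: memv_adjoin | exact: inKy].
Qed.

(* A Galois extension K/K0 has a nonzero integral primitive element: scale a
   primitive element by a suitable nonzero integer. *)
Lemma integral_primitive_element {K0 K : {subfield L}} : galois K0 K ->
  exists th : L, [/\ th \in K, Int th, th != 0 & <<K0; th>>%VS = K].
Proof.
case/and3P => sK0K sepK _.
set t0 := separable_generator K0 K.
have t0K : t0 \in K by rewrite /t0 separable_generator_mem.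
have [a nz_a It] := exists_Int_multiple t0.
have nz_aL : (a%:~R : L) != 0.
  by rewrite -(rmorph_int (in_alg L)) fmorph_eq0 intr_eq0.
have Dth : <<K0; a%:~R * t0>>%VS = K.
  rewrite -[a%:~R * t0]add0r adjoin_affine ?rpred0 ?rpred_int //.
  by rewrite -(eq_adjoin_separable_generator sepK sK0K).
have [th0 | nz_th] := eqVneq (a%:~R * t0 : L) 0; last first.
  by exists (a%:~R * t0); rewrite rpredM ?rpred_int.
exists 1; split; [exact: rpred1 | exact: integral1 | exact: oner_neq0 |].
by rewrite -Dth th0 (Fadjoin_idP (rpred0 _)) (Fadjoin_idP (rpred1 _)).
Qed.

Lemma primitive_conjugates_neq {K0 K : {subfield L}} {th : L} :
  <<K0; th>>%VS = K -> forall g h : gal_of K,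
  g \in 'Gal(K / K0)%g -> h \in 'Gal(K / K0)%g -> g != h -> g th - h th != 0.
Proof.
move: (K : {vspace L}) => V <- g h gG hG.
by rewrite subr_eq0 -(gal_adjoin_eq gG hG).
Qed.

Local Notation N x := (galNorm 1%VS fullv x).

(* L/Q is Galois (L is a splitting field in characteristic 0). *)
Lemma galois_full : galois (1%AS : {subfield L}) fullv.
Proof.
apply/and3P; split; first exact: subvf.
  apply/separableP => y _; apply: pcharf0_separable.
  by move=> p; rewrite (pchar_lalg L) pchar_num.
exact: normalFieldf.
Qed.

Lemma norm_rat (x : L) : exists r : rat, N x = r%:A.
Proof. by have /vlineP[r ->] := mem_galNorm galois_full (memvf x); exists r. Qed.

Lemma Int_norm (x : L) : Int x -> Int (N x).
Proof. by move=> Ix; apply: Int_prod => s _; apply: Int_aend. Qed.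

Lemma norm_factor (x : L) : Int x -> exists2 y, Int y & N x = x * y.
Proof.
move=> Ix; exists (\prod_(s in 'Gal(fullv / 1%VS)%g | s != 1%g) s x).
  by apply: Int_prod => s _; apply: Int_aend.
by rewrite /galNorm (bigD1 1%g) ?group1 //= gal_id.
Qed.

Lemma norm_unit_sqr (z w : L) : Int z -> Int w -> z * w = 1 -> N z ^+ 2 = 1.
Proof.
move=> Iz Iw zw.
have [r Dr] := norm_rat z; have [s Ds] := norm_rat w.
have /Int_rat/intrP[a Da] : Int r%:A by rewrite -Dr; exact: Int_norm.
have /Int_rat/intrP[c Dc] : Int s%:A by rewrite -Ds; exact: Int_norm.
have rs1 : r * s = 1.
  apply: (fmorph_inj (in_alg L)).
  by rewrite rmorphM rmorph1 /= -Dr -Ds -galNormM zw galNorm1.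
have ca1 : c * a = 1 by apply: (@intr_inj rat); rewrite rmorphM /= -Da -Dc mulrC rs1.
have a2 : a ^+ 2 = 1 by apply/eqP; rewrite sqrf_eq1; exact: intUnitRing.unitzPl ca1.
by rewrite Dr Da scaler_int -rmorphXn /= a2.
Qed.

(* The naturals are distinct in L, so a nonzero polynomial over L does not
   vanish at every natural number. *)
Lemma exists_nat_nonroot (p : {poly L}) : p != 0 -> exists m : nat, ~~ root p m%:R.
Proof.
move=> nz_p.
have natL_inj : injective (fun n : nat => (n%:R : L)).
  move=> m n /= /eqP; rewrite -(rmorph_nat (in_alg L) m) -(rmorph_nat (in_alg L) n).
  by rewrite (inj_eq (fmorph_inj (in_alg L))) eqr_nat => /eqP.
pose rs := [seq j%:R : L | j <- iota 0 (size p)].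
have urs : uniq rs by rewrite map_inj_uniq ?iota_uniq.
have : ~~ all (root p) rs.
  apply/negP => /(max_poly_roots nz_p) /(_ urs).
  by rewrite size_map size_iota ltnn.
by case/allPn => _ /mapP[j _ ->] nr; exists j.
Qed.

(* For x <> 0, N(1 + m x) = prod_s (1 + m s(x)) is a nonconstant polynomial in
   m, so it differs from +-1 for some natural m. *)
Lemma norm_shift_nonunit (x : L) : x != 0 ->
  exists m : nat, N (1 + m%:R * x) ^+ 2 != 1.
Proof.
move=> nz_x; pose S := ('Gal(fullv / 1%VS) : {set gal_of (fullv : {vspace L})})%g.
pose P := \prod_(s in S) ((s x)%:P * 'X + 1).
have PE m : P.[m%:R] = N (1 + m%:R * x).
  rewrite horner_prod /galNorm; apply: eq_bigr => s _.
  by rewrite !hornerE rmorphD rmorph1 rmorphM rmorph_nat mulrC addrC.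
have sF (s : gal_of (fullv : {vspace L})) : size ((s x)%:P * 'X + 1) = 2%N.
  by rewrite size_MXaddC polyC_eq0 oner_eq0 andbF size_polyC fmorph_eq0 nz_x.
have sP : size P = #|S|.+1.
  rewrite size_prod => [|s _]; last by rewrite -size_poly_eq0 sF.
  rewrite (eq_bigr (fun _ => 2%N)) => [|s _]; last exact: sF.
  by rewrite sum_nat_const -[#|in_mem^~ _|]/#|S|; lia.
have S_gt0 : (0 < #|S|)%N by apply/card_gt0P; exists 1%g; exact: group1.
have nz_Q : P * P - 1 != 0.
  rewrite subr_eq0; apply/eqP => /(congr1 (fun q : {poly L} => size q)).
  by rewrite size_mul -?size_poly_eq0 ?sP // size_poly1; lia.
have [m nr] := exists_nat_nonroot (P * P - 1) nz_Q; exists m.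
rewrite -PE; apply: contra nr => /eqP P2.
by rewrite /root hornerD hornerN hornerM hornerC -expr2 P2 subrr.
Qed.

(* Any finite family of nonzero integers of K has a common multiple in O_K
   which is a nonzero rational integer: the norm of their product. *)
Lemma common_rational_multiple {K : {subfield L}} {I : finType} {P : pred I}
    {F : I -> L} :
  (forall i, P i -> in_ring_of_integers K (F i)) -> (forall i, P i -> F i != 0) ->
  exists d : rat, [/\ d != 0, Int d%:A &
    forall i, P i -> exists2 f, in_ring_of_integers K f & d%:A = F i * f].
Proof.
move=> OF nzF; pose D := \prod_(i | P i) F i.
have ID : Int D by apply: Int_prod => i /OF[_ /IntE].
have [d Dd] := norm_rat D; have [R IR DR] := norm_factor D ID.
exists d; split.
- rewrite -(fmorph_eq0 (in_alg L)) /= -Dd galNorm_eq0.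
  by apply/prodf_neq0 => i; exact: nzF.
- by rewrite -Dd; exact: Int_norm.
move=> i Pi; have [FK IF] := OF i Pi.
have DdE : d%:A = F i * ((\prod_(j | P j && (j != i)) F j) * R).
  by rewrite -Dd DR /D (bigD1 i) //= mulrA.
exists ((\prod_(j | P j && (j != i)) F j) * R) => //; split.
  have -> : (\prod_(j | P j && (j != i)) F j) * R = d%:A / F i.
    by rewrite DdE mulrAC divff ?mul1r ?nzF.
  by rewrite rpredM ?rpredV // rpredZ ?rpred1.
apply/IntE; apply: integral_mul => //.
by apply: Int_prod => j /andP[/OF[_ /IntE]].
Qed.

Lemma conjugate_differences_multiple {K0 K : {subfield L}} {th b : L} :
    <<K0; th>>%VS = K -> in_ring_of_integers K th ->
    in_ring_of_integers K b -> b != 0 ->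
  exists d : rat, [/\ d != 0, Int d%:A,
    exists2 f, in_ring_of_integers K f & d%:A = b * f &
    forall g h : gal_of K, g \in 'Gal(K / K0)%g -> h \in 'Gal(K / K0)%g -> g != h ->
      exists2 f, in_ring_of_integers K f & d%:A = (g th - h th) * f].
Proof.
move=> Dth Oth Ob nz_b.
pose P (i : option (gal_of K * gal_of K)) := if i is Some gh
  then [&& gh.1 \in 'Gal(K / K0)%g, gh.2 \in 'Gal(K / K0)%g & gh.1 != gh.2] else true.
pose F (i : option (gal_of K * gal_of K)) := if i is Some gh then gh.1 th - gh.2 th else b.
have OF i : P i -> in_ring_of_integers K (F i).
  case: i => [[g h] _|_] //=.
  by apply: roiD; [exact: roi_gal | apply: roiN; exact: roi_gal].
have nzF i : P i -> F i != 0.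
  case: i => [[g h] /and3P[gG hG ngh]|_] //=.
  exact: primitive_conjugates_neq Dth g h gG hG ngh.
have [d [nz_d Id dvd_d]] := common_rational_multiple OF nzF.
exists d; split => // [|g h gG hG ngh]; first exact: dvd_d None isT.
exact: dvd_d (Some (g, h)) (introT and3P (And3 gG hG ngh)).
Qed.

Lemma shifted_primitive_element {K0 K : {subfield L}} {th b : L} {d : rat} {m : nat} :
    <<K0; th>>%VS = K -> in_ring_of_integers K th -> Int d%:A -> d != 0 -> m != 0%N ->
    (exists2 f, in_ring_of_integers K f & d%:A = b * f) ->
    (forall g h : gal_of K, g \in 'Gal(K / K0)%g -> h \in 'Gal(K / K0)%g -> g != h ->
      exists2 f, in_ring_of_integers K f & d%:A = (g th - h th) * f) ->
  let z := 1 + m%:R * (d%:A * th) in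
  [/\ in_ring_of_integers K z, <<K0; z>>%VS = K,
      forall g h : gal_of K, g \in 'Gal(K / K0)%g -> h \in 'Gal(K / K0)%g -> g != h ->
        int_coprime K (g z) (h z)
    & forall g : gal_of K, int_coprime K (g z) b].
Proof.
move=> Dth Oth Id nz_d nz_m [fb Ofb Dfb] dvd_conj z.
pose e : L := m%:R * d%:A.
have Dz : z = 1 + e * th by rewrite /z mulrA.
have nz_mL : (m%:R : L) != 0 by rewrite -(rmorph_nat (in_alg L)) fmorph_eq0 pnatr_eq0.
have nz_e : e != 0 by rewrite mulf_neq0 // scaler_eq0 negb_or nz_d oner_neq0.
have Oe : in_ring_of_integers K e.
  split; first by rewrite rpredM ?rpred_nat // rpredZ ?rpred1.
  by apply/IntE; apply: integral_mul (integral_nat _ _) Id.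
(* e is rational, hence fixed by every automorphism. *)
have conj_z (f : 'AEnd(L)) : f z = 1 + e * f th.
  rewrite Dz rmorphD rmorph1 !rmorphM rmorph_nat.
  by congr (1 + _ * _ * _); exact: rmorph_alg.
have Omf f : in_ring_of_integers K f -> in_ring_of_integers K (m%:R * f).
  by move=> Of; apply: roiM => //; exact: roi_nat.
split.
- by rewrite Dz; apply: roiD; [exact: roi1 | exact: roiM].
- by rewrite Dz adjoin_affine ?rpred1 // rpredM ?rpred_nat // rpredZ ?rpred1.
- move=> g h gG hG ngh; have [f Of Df] := dvd_conj g h gG hG ngh.
  apply: (coprime_shifts Oe (roi_gal g Oth) (Omf f Of) (conj_z g) (conj_z h)).
  by rewrite /e Df mulrCA.
- move=> g; apply: (coprime_one_mod (roi_gal g Oth) (Omf fb Ofb) (conj_z g)).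
  by rewrite /e Dfb mulrCA.
Qed.

End IntegersOfL.

Theorem lemma6p4 (L : splittingFieldType rat) (K0 K : {subfield L})
    (hK0K : (K0 <= K)%VS) (hgal : galois K0 K)
    (b : L) (hb : in_ring_of_integers K b) (hb0 : b != 0) :
  exists z : L,
    [/\ in_ring_of_integers K z,
        ~ (exists w : L, in_ring_of_integers K w /\ z * w = 1),
        <<K0; z>>%VS = K,
        (forall g h : gal_of K, g \in 'Gal(K / K0)%g -> h \in 'Gal(K / K0)%g ->
           g != h ->
           exists r s : L, [/\ in_ring_of_integers K r, in_ring_of_integers K s &
                               g z * r + h z * s = 1])
      & (forall g : gal_of K, g \in 'Gal(K / K0)%g ->
           exists r s : L, [/\ in_ring_of_integers K r, in_ring_of_integers K s &
                               g z * r + b * s = 1])].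
Proof.
have [th [thK Ith nz_th Dth]] := integral_primitive_element hgal.
have Oth : in_ring_of_integers K th by split; last exact/IntE.
have [d [nz_d Id dvd_b dvd_conj]] := conjugate_differences_multiple Dth Oth hb hb0.
have nz_dth : d%:A * th != 0 by rewrite mulf_neq0 // scaler_eq0 negb_or nz_d oner_neq0.
have [m nz_Nz] := norm_shift_nonunit (d%:A * th) nz_dth.
have nz_m : m != 0%N.
  by apply: contraNneq nz_Nz => ->; rewrite mul0r addr0 galNorm1 expr1n.
have [Oz Dz cop_conj cop_b] := shifted_primitive_element Dth Oth Id nz_d nz_m dvd_b dvd_conj.
exists (1 + m%:R * (d%:A * th)).
split; [exact: Oz | | exact: Dz | exact: cop_conj | move=> g _; exact: cop_b].
(* A unit of O_K would have norm +-1. *)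
case=> w [[_ /IntE Iw] zw]; have [_ /IntE Iz] := Oz.
by move: nz_Nz; rewrite (norm_unit_sqr _ _ Iz Iw zw) eqxx.
Qed.
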